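(* Every pseudospectral SBP operator has the eigenvalue property: if $D_+,D_-$ form a pair of SBP operators of order $q=n$ on $[a,b]$ with associated data $H,S,\mathbf{p}_0,\mathbf{p}_n,\mathbf{x}$ (where $\mathbf{x}\in\mathbb{R}^{n+1}$), then every eigenvalue of $\tilde D_+ = D_+ + H^{-1}\mathbf{p}_0\mathbf{p}_0^\top$ has strictly positive real part.
   Context: Let $[a,b]$ be an interval with $b>a$ and $n\ge 1$. For $\mathbf{x}\in\mathbb{R}^{n+1}$, $\mathbf{x}^j$ denotes elementwise exponentiation, with $\mathbf{x}^0=\mathbf{1}=(1,\dots,1)^\top$. Matrices $D_+, D_-\in\mathbb{R}^{(n+1)\times(n+1)}$ form a pair of SBP (summation-by-parts) operators of order $q\ge 1$ on $[a,b]$ if there exist matrices $H,S\in\mathbb{R}^{(n+1)\times(n+1)}$ and vectors $\mathbf{p}_0,\mathbf{p}_n,\mathbf{x}\in\mathbb{R}^{n+1}$ such that: (A) $D_\pm \mathbf{x}^j = j\mathbf{x}^{j-1}$, $\mathbf{p}_0^\top\mathbf{x}^j = a^j$, $\mathbf{p}_n^\top \mathbf{x}^j = b^j$ for $j=0,\dots,q$ (with $0\cdot\mathbf{x}^{-1}:=\mathbf{0}$); (B) $H=H^\top$ is positive definite; (C) $HD_+ + D_+^\top H = -\mathbf{p}_0\mathbf{p}_0^\top + \mathbf{p}_n\mathbf{p}_n^\top + S$ with $S=S^\top$ positive semidefinite; (D) $HD_+ + D_-^\top H = -\mathbf{p}_0\mathbf{p}_0^\top + \mathbf{p}_n\mathbf{p}_n^\top$;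 (E) $\mathbf{x}=(x_0,\dots,x_n)^\top$ with $x_i\ne x_j$ for $i\ne j$. A pseudospectral SBP operator is a pair of SBP operators of order $q=n$ (i.e. the order equals the number of nodes minus one). The SBP operator has the eigenvalue property if every eigenvalue of $\tilde D_+ := D_+ + H^{-1}\mathbf{p}_0\mathbf{p}_0^\top$ has strictly positive real part. *)

From mathcomp Require Import all_boot all_order all_algebra.
From mathcomp Require Import reals.
From mathcomp.real_closed Require Import complex.
Set Implicit Arguments.
Unset Strict Implicit.
Unset Printing Implicit Defensive.
Import Order.TTheory GRing.Theory Num.Theory.
Local Open Scope ring_scope.

Definition xpow (R : pzRingType) (m : nat) (x : 'cV[R]_m) (j : nat) : 'cV[R]_m :=
  \col_i (x i 0 ^+ j).

Definition posdef (R : realFieldType) (m : nat) (A : 'M[R]_m) : Prop :=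
  A^T = A /\ forall v : 'cV[R]_m, v != 0 -> 0 < (v^T *m A *m v) 0 0.

Definition possemidef (R : realFieldType) (m : nat) (A : 'M[R]_m) : Prop :=
  A^T = A /\ forall v : 'cV[R]_m, 0 <= (v^T *m A *m v) 0 0.

Definition SBP_pair (R : realFieldType) (n : nat) (a b : R) (q : nat)
    (Dp Dm H S : 'M[R]_n.+1) (p0 pn x : 'cV[R]_n.+1) : Prop :=
  [/\ (forall j, (j <= q)%N ->
         [/\ Dp *m xpow x j = j%:R *: xpow x j.-1,
             Dm *m xpow x j = j%:R *: xpow x j.-1,
             p0^T *m xpow x j = (a ^+ j)%:M &
             pn^T *m xpow x j = (b ^+ j)%:M]),
      posdef H,
      H *m Dp + Dp^T *m H = - (p0 *m p0^T) + pn *m pn^T + S /\ possemidef S,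
      H *m Dp + Dm^T *m H = - (p0 *m p0^T) + pn *m pn^T &
      (forall i j : 'I_n.+1, i != j -> x i 0 != x j 0)].

Definition complexify (R : rcfType) (m : nat) (A : 'M[R]_m) : 'M[R[i]]_m :=
  map_mx (fun r => (r%:C)%C) A.

Definition eigenvalue_property (R : rcfType) (n : nat)
    (Dp H : 'M[R]_n.+1) (p0 : 'cV[R]_n.+1) : Prop :=
  forall lam : R[i],
    eigenvalue (complexify (Dp + invmx H *m (p0 *m p0^T))) lam -> 0 < Re lam.

From mathcomp Require Import all_boot all_order all_algebra.
From mathcomp Require Import reals.
From mathcomp.real_closed Require Import complex.
From mathcomp Require Import lra.
Set Implicit Arguments. Unset Strict Implicit. Unset Printing Implicit Defensive.
Import Order.TTheory GRing.Theory Num.Theory.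
Local Open Scope ring_scope.

(* Suppose lam is an eigenvalue of D~ = D_+ + H^-1 p0 p0^T with Re lam <= 0 and
   eigenvector v.  The SBP property gives the energy identity
   H D~ + D~^T H = p0 p0^T + pn pn^T + S, so 2 Re lam v^*Hv >= |p0^T v|^2 forces
   p0^T v = 0; hence D_+ v = lam v.  Since D_+ is exact on polynomials of degree
   <= n and the n+1 nodes are distinct, v is the nodal vector of a polynomial P
   with P' = lam P, so P is a constant c, and then c = p0^T v = 0. *)

Local Notation mxC := (map_mx (real_complex _)).
Local Notation mxRe := (map_mx (@complex.Re _)).
Local Notation mxIm := (map_mx (@complex.Im _)).

Lemma char_poly_trmx (R : comNzRingType) n (A : 'M[R]_n) :
  char_poly A^T = char_poly A.
Proof.
by rewrite /char_poly -det_tr /char_poly_mx linearB /= tr_scalar_mx map_trmx trmxK.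
Qed.

Lemma eigenvalue_trmx (F : fieldType) n (A : 'M[F]_n) a :
  eigenvalue A^T a = eigenvalue A a.
Proof. by rewrite !eigenvalue_root_char char_poly_trmx. Qed.

Lemma eigenvalue_colP (F : fieldType) n (A : 'M[F]_n) a :
  eigenvalue A a -> exists2 v : 'cV_n, v != 0 & A *m v = a *: v.
Proof.
rewrite -eigenvalue_trmx => /eigenvalueP [w wA w_neq0].
exists w^T; first by rewrite trmx_eq0.
by rewrite -[A]trmxK -trmx_mul wA linearZ.
Qed.

Lemma size_deriv_eq_scale_le1 (F : numDomainType) (p : {poly F}) c :
  p^`() = c *: p -> (size p <= 1)%N.
Proof.
have [->|c_neq0 dp] := eqVneq c 0.
  rewrite scale0r => dp0; apply/leq_sizeP => -[//|j] _.
  have /eqP := coef_deriv p j; rewrite dp0 coef0 eq_sym mulrn_eq0 /=.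
  by move/eqP.
have [->|p_neq0] := eqVneq p 0; first by rewrite size_poly0.
by have := lt_size_deriv p_neq0; rewrite dp size_scale // ltnn.
Qed.

Lemma size_deriv_le (R : nzSemiRingType) (p : {poly R}) :
  (size p^`() <= size p)%N.
Proof.
by have [->|/lt_size_deriv/ltnW //] := eqVneq p 0; rewrite deriv0 size_poly0.
Qed.

Section NodalValues.
Variables (F : numFieldType) (m : nat) (x : 'cV[F]_m.+1).

Definition nodal_values (p : {poly F}) : 'cV_m.+1 := \col_i p.[x i 0].

Lemma nodal_valuesC c : nodal_values c%:P = c *: xpow x 0.
Proof. by apply/matrixP => i j; rewrite !mxE hornerC mulr1. Qed.

Lemma nodal_valuesE k (p : {poly F}) :
  (size p <= k)%N -> nodal_values p = \sum_(j < k) p`_j *: xpow x j.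
Proof.
move=> size_p; apply/matrixP => i l.
rewrite !mxE (horner_coef_wide _ size_p) summxE.
by apply: eq_bigr => j _; rewrite !mxE.
Qed.

Lemma mulmx_nodal_values (D : 'M[F]_m.+1) (p : {poly F}) :
  (forall j, (j <= m)%N -> D *m xpow x j = j%:R *: xpow x j.-1) ->
  (size p <= m.+1)%N -> D *m nodal_values p = nodal_values p^`().
Proof.
move=> D_exact size_p.
have size_dp : (size p^`() <= m)%N.
  have [->|/lt_size_deriv] := eqVneq p 0; first by rewrite deriv0 size_poly0.
  by move/leq_trans/(_ size_p).
rewrite (nodal_valuesE size_p) (nodal_valuesE size_dp) mulmx_sumr big_ord_recl.
rewrite -scalemxAr D_exact // scale0r scaler0 add0r.
apply: eq_bigr => j _; rewrite -scalemxAr D_exact ?coef_deriv /=.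
  by rewrite scalerA mulr_natr.
by rewrite /bump /= add1n ltn_ord.
Qed.

Local Notation V := (Vandermonde m.+1 x^T)^T.

Lemma nodal_values_vandermonde (p : {poly F}) :
  (size p <= m.+1)%N -> nodal_values p = V *m \col_(j < m.+1) p`_j.
Proof.
move=> size_p; apply/matrixP => i l.
rewrite !mxE (horner_coef_wide _ size_p).
by apply: eq_bigr => j _; rewrite !mxE mulrC.
Qed.

Hypothesis x_inj : forall i j : 'I_m.+1, i != j -> x i 0 != x j 0.

Lemma vandermonde_nodes_unitmx : V \in unitmx.
Proof.
rewrite unitmx_tr unitmxE det_Vandermonde unitfE.
apply/prodf_neq0 => i _; apply/prodf_neq0 => j lt_ij; rewrite !mxE subr_eq0.
by apply: x_inj; rewrite neq_ltn lt_ij orbT.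
Qed.

Lemma nodal_values_eq0 (p : {poly F}) :
  (size p <= m.+1)%N -> nodal_values p = 0 -> p = 0.
Proof.
move=> size_p; rewrite nodal_values_vandermonde //.
move/(congr1 (mulmx (invmx V))); rewrite mulKmx ?vandermonde_nodes_unitmx //.
rewrite mulmx0 => /matrixP coef_p0; apply/polyP => j; rewrite coef0.
have [lt_jm | le_mj] := ltnP j m.+1; last exact: nth_default (leq_trans size_p le_mj).
by have := coef_p0 (Ordinal lt_jm) 0; rewrite !mxE.
Qed.

Lemma nodal_values_onto (v : 'cV[F]_m.+1) :
  exists2 p : {poly F}, (size p <= m.+1)%N & nodal_values p = v.
Proof.
exists (\poly_(j < m.+1) (invmx V *m v) (inord j) 0); first exact: size_poly.
rewrite nodal_values_vandermonde ?size_poly //.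
have -> : \col_(j < m.+1) (\poly_(j < m.+1) (invmx V *m v) (inord j) 0)`_j
          = invmx V *m v.
  by apply/matrixP => j l; rewrite mxE coef_poly ltn_ord inord_val (ord1 l).
by rewrite mulKVmx ?vandermonde_nodes_unitmx.
Qed.

Lemma exact_eigenvector_const (D : 'M[F]_m.+1) lam (v : 'cV[F]_m.+1) :
  (forall j, (j <= m)%N -> D *m xpow x j = j%:R *: xpow x j.-1) ->
  D *m v = lam *: v -> exists c, v = c *: xpow x 0.
Proof.
move=> D_exact; have [p size_p <-] := nodal_values_onto v => Dv.
have dp : p^`() = lam *: p.
  apply/eqP; rewrite -subr_eq0; apply/eqP/nodal_values_eq0.
    rewrite (leq_trans (size_polyD _ _)) // geq_max size_polyN.
    by rewrite (leq_trans (size_deriv_le p)) // (leq_trans (size_scale_leq _ _)).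
  rewrite -(subrr (D *m nodal_values p)) {2}Dv mulmx_nodal_values //.
  by apply/matrixP => i l; rewrite !mxE hornerD hornerN hornerZ.
exists p`_0; rewrite {1}[p]size1_polyC ?nodal_valuesC //.
exact: size_deriv_eq_scale_le1 dp.
Qed.

Lemma exact_eigenvector_eq0 (D : 'M[F]_m.+1) (e : 'rV[F]_m.+1) lam
    (v : 'cV[F]_m.+1) :
  (forall j, (j <= m)%N -> D *m xpow x j = j%:R *: xpow x j.-1) ->
  e *m xpow x 0 = 1%:M -> D *m v = lam *: v -> e *m v = 0 -> v = 0.
Proof.
move=> D_exact e1 /(exact_eigenvector_const D_exact) [c ->].
rewrite -scalemxAr e1 => /matrixP/(_ 0 0).
by rewrite !mxE eqxx mulr1 => ->; rewrite scale0r.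
Qed.
End NodalValues.

Section QuadraticForms.
Variables (R : realFieldType) (m : nat).
Implicit Types (A P : 'M[R]_m) (p u w : 'cV[R]_m).

Definition qform A u := (u^T *m A *m u) 0 0.

Lemma qformD A B u : qform (A + B) u = qform A u + qform B u.
Proof. by rewrite /qform mulmxDr mulmxDl mxE. Qed.

Lemma qform_tr A u : qform A^T u = qform A u.
Proof.
rewrite /qform; have -> : u^T *m A^T *m u = (u^T *m A *m u)^T.
  by rewrite !trmx_mul trmxK mulmxA.
by rewrite mxE.
Qed.

Lemma qform_rank1 p u : qform (p *m p^T) u = (p^T *m u) 0 0 ^+ 2.
Proof.
rewrite /qform !mulmxA -mulmxA mxE big_ord1 expr2; congr (_ * _).
by rewrite -[u^T *m p]trmxK trmx_mul trmxK mxE.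
Qed.

Lemma qform_rank1_ge0 p u : 0 <= qform (p *m p^T) u.
Proof. by rewrite qform_rank1 sqr_ge0. Qed.

Lemma bilinear_form_symmetric A u w :
  A^T = A -> (u^T *m A *m w) 0 0 = (w^T *m A *m u) 0 0.
Proof.
move=> symA; have -> : u^T *m A *m w = (w^T *m A *m u)^T.
  by rewrite !trmx_mul trmxK symA mulmxA.
by rewrite mxE.
Qed.

Lemma dissipative_eigen_boundary_eq0 H M P p u w (al be : R) :
  possemidef H -> (forall v, 0 <= qform P v) ->
  H *m M + M^T *m H = p *m p^T + P ->
  M *m u = al *: u - be *: w -> M *m w = be *: u + al *: w -> al <= 0 ->
  p^T *m u = 0 /\ p^T *m w = 0.
Proof.
move=> [symH H_ge0] P_ge0 HM_sym Mu Mw al_le0.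
have energy v : 2 * qform (H *m M) v = (p^T *m v) 0 0 ^+ 2 + qform P v.
  rewrite -qform_rank1 -qformD -HM_sym qformD.
  have -> : M^T *m H = (H *m M)^T by rewrite trmx_mul symH.
  by rewrite qform_tr mulr2n mulrDl mul1r.
pose B (v v' : 'cV[R]_m) := (v^T *m H *m v') 0 0.
have qHM v : qform (H *m M) v = B v (M *m v) by rewrite /qform /B !mulmxA.
have Eu : qform (H *m M) u = al * B u u - be * B u w.
  by rewrite qHM Mu /B mulmxBr -!scalemxAr !mxE.
have Ew : qform (H *m M) w = be * B u w + al * B w w.
  by rewrite qHM Mw /B mulmxDr -!scalemxAr (bilinear_form_symmetric u w symH) !mxE.
have := energy u; have := energy w; rewrite Eu Ew /B => energy_w energy_u.
have alHu := mulr_le0_ge0 al_le0 (H_ge0 u); have alHw := mulr_le0_ge0 al_le0 (H_ge0 w).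
have Pu := P_ge0 u; have Pw := P_ge0 w.
have sq_u := sqr_ge0 ((p^T *m u) 0 0); have sq_w := sqr_ge0 ((p^T *m w) 0 0).
have pu0 : (p^T *m u) 0 0 ^+ 2 = 0 by lra.
have pw0 : (p^T *m w) 0 0 ^+ 2 = 0 by lra.
by split; apply/matrixP => i j; rewrite !ord1 [RHS]mxE; apply/eqP;
  rewrite -sqrf_eq0 ?pu0 ?pw0.
Qed.
End QuadraticForms.

Section ComplexMatrix.
Variable R : rcfType.

Lemma mxRe_mulC m n p (A : 'M[R]_(m, n)) (v : 'M[R[i]]_(n, p)) :
  mxRe (mxC A *m v) = A *m mxRe v.
Proof.
apply/matrixP => i j; rewrite !mxE (raddf_sum (@complex.Re R : Rcomplex R -> R)).
by apply: eq_bigr => k _; rewrite !mxE; case: (v k j) => a b /=; rewrite mul0r subr0.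
Qed.

Lemma mxIm_mulC m n p (A : 'M[R]_(m, n)) (v : 'M[R[i]]_(n, p)) :
  mxIm (mxC A *m v) = A *m mxIm v.
Proof.
apply/matrixP => i j; rewrite !mxE (raddf_sum (@complex.Im R : Rcomplex R -> R)).
by apply: eq_bigr => k _; rewrite !mxE; case: (v k j) => a b /=; rewrite mul0r addr0.
Qed.

Lemma mxRe_scale m n (lam : R[i]) (v : 'M[R[i]]_(m, n)) :
  mxRe (lam *: v) = complex.Re lam *: mxRe v - complex.Im lam *: mxIm v.
Proof. by apply/matrixP => i j; rewrite !mxE; case: lam; case: (v i j). Qed.

Lemma mxIm_scale m n (lam : R[i]) (v : 'M[R[i]]_(m, n)) :
  mxIm (lam *: v) = complex.Im lam *: mxRe v + complex.Re lam *: mxIm v.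
Proof.
apply/matrixP => i j; rewrite !mxE; case: lam; case: (v i j) => a b c d /=.
by rewrite addrC mulrC [d * _]mulrC.
Qed.

Lemma mxReIm_eq0 m n (v : 'M[R[i]]_(m, n)) : mxRe v = 0 -> mxIm v = 0 -> v = 0.
Proof.
move=> /matrixP Re0 /matrixP Im0; apply/matrixP => i j.
by move: (Re0 i j) (Im0 i j); rewrite !mxE; case: (v i j) => a b /= -> ->.
Qed.
End ComplexMatrix.

Lemma posdef_possemidef (R : realFieldType) m (A : 'M[R]_m) : posdef A -> possemidef A.
Proof.
move=> [symA A_pos]; split=> // v.
by have [->|/A_pos/ltW //] := eqVneq v 0; rewrite mulmx0 mxE.
Qed.

Lemma posdef_unitmx (R : realFieldType) m (A : 'M[R]_m) : posdef A -> A \in unitmx.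
Proof.
move=> [_ A_pos]; rewrite unitmxE unitfE; apply/negP => /det0P [w w_neq0 wA].
by have := A_pos w^T; rewrite trmx_eq0 w_neq0 trmxK wA mul0mx mxE ltxx => /(_ isT).
Qed.

Lemma sat_energy_identity (R : comUnitRingType) m (H D G : 'M[R]_m) (p : 'cV[R]_m) :
  H^T = H -> H \in unitmx -> H *m D + D^T *m H = - (p *m p^T) + G ->
  let M := D + invmx H *m (p *m p^T) in H *m M + M^T *m H = p *m p^T + G.
Proof.
move=> symH H_unit HD M; rewrite mulmxDr mulmxA mulmxV // mul1mx.
rewrite linearD /= mulmxDl trmx_mul trmx_inv symH trmx_mul trmxK.
rewrite -[_ *m invmx H *m H]mulmxA mulVmx // mulmx1.
by rewrite addrACA HD addrC addrA addrK.
Qed.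

Lemma map_xpow (R S : pzRingType) (f : {rmorphism R -> S}) m (x : 'cV[R]_m) j :
  xpow (map_mx f x) j = map_mx f (xpow x j).
Proof. by apply/matrixP => i l; rewrite !mxE rmorphXn. Qed.

Theorem theorem3 (R : realType) (n : nat) (a b : R)
    (Dp Dm H S : 'M[R]_n.+1) (p0 pn x : 'cV[R]_n.+1) :
  a < b -> (1 <= n)%N ->
  SBP_pair a b n Dp Dm H S p0 pn x ->
  eigenvalue_property Dp H p0.
Proof.
move=> _ _ [D_exact H_pd [HD_energy [_ S_ge0]] _ x_inj] lam.
have [symH _] := H_pd.
set M := Dp + invmx H *m (p0 *m p0^T).
move=> /eigenvalue_colP [v v_neq0 Mv]; have {}Mv : mxC M *m v = lam *: v := Mv.
rewrite -complexRe ltcR ltNge; apply/negP => Re_le0.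
have [p0_Re p0_Im] : p0^T *m mxRe v = 0 /\ p0^T *m mxIm v = 0.
  apply: (dissipative_eigen_boundary_eq0 (H := H) (M := M) (P := pn *m pn^T + S)
           (be := complex.Im lam) _ _ _ _ _ Re_le0).
  - exact: posdef_possemidef.
  - by move=> u; rewrite qformD addr_ge0 ?qform_rank1_ge0 ?S_ge0.
  - by apply: sat_energy_identity => //; [exact: posdef_unitmx | rewrite addrA].
  - by rewrite -mxRe_mulC Mv mxRe_scale.
  - by rewrite -mxIm_mulC Mv mxIm_scale.
have p0v : mxC p0^T *m v = 0 by apply: mxReIm_eq0; rewrite ?mxRe_mulC ?mxIm_mulC.
have Dv : mxC Dp *m v = lam *: v.
  by rewrite -Mv map_mxD mulmxDl !map_mxM -!mulmxA p0v !mulmx0 addr0.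
apply/(negP v_neq0)/eqP/(exact_eigenvector_eq0 (x := mxC x) _ _ _ Dv p0v).
- by move=> i j ij; rewrite !mxE (inj_eq (@complexI R)) x_inj.
- move=> j le_jn; rewrite !map_xpow -map_mxM; case: (D_exact j le_jn) => -> _ _ _.
  by rewrite map_mxZ rmorph_nat.
- rewrite map_xpow -map_mxM; case: (D_exact 0%N isT) => _ _ -> _.
  by rewrite expr0 map_scalar_mx rmorph1.
Qed.
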